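(* Let $L$ be a second-order linear partial differential operator in $\mathbb{R}^n$ with decomposable principal symbol, and suppose $L = X_1X_2 - H$ with first-order operators $X_1, X_2, H$ such that $[H,X_2] = \varkappa H + \varrho X_2$ for some functions $\varkappa,\varrho\in\mathbf{F}$ (i.e. $L$ admits the Dini transformation with resulting operator $L_{Dini} = X_2X_1 - H + \varkappa X_1 + \varrho$). Then there exists a function $\alpha\in\mathbf{F}$ such that, writing $L = (X_1+\alpha)X_2 - (H+\alpha X_2) = \widetilde{X}_1X_2 - \widetilde{H}$, one has $[\widetilde{H},X_2] = \psi\widetilde{H}$ with $\psi=\varkappa$, so that $L$ admits the Intertwining Laplace Transformation (with $\omega=\psi$) whose resulting operator is $L_1 = X_2\widetilde{X}_1 + \psi\widetilde{X}_1 - \widetilde{H} = L_{Dini}$.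
   Context: $\mathbf{F}$ is a differentially closed field of functions of $x_1,\ldots,x_n$; operators have coefficients in $\mathbf{F}$; $[A,B]=AB-BA$. An Intertwining Laplace Transformation of $L = X_1X_2 - H$ ($H\ne0$) is defined when $\omega=-[X_2,H]H^{-1}$ (computed in the skew Ore field of fractions of the operator ring) is a differential operator, and it produces $L_1 = X_2X_1+\omega X_1 - H$. Decomposable principal symbol means the principal symbol is a product of two polynomials linear in the symbol variables. *)

From HB Require Import structures.
From mathcomp Require Import all_boot all_order all_algebra.
From mathcomp Require Import mpoly.
Set Implicit Arguments.
Unset Strict Implicit.
Unset Printing Implicit Defensive.
Import Order.TTheory GRing.Theory.
Local Open Scope ring_scope.

(* (D i plays the role of d/dx_{i+1}).                                 *)
Section DiffField.
Context {n : nat} {F : fieldType}.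

Definition diff_field (D : 'I_n -> F -> F) : Prop :=
  [/\ forall i a b, D i (a + b) = D i a + D i b,
      forall i a b, D i (a * b) = D i a * b + a * D i b &
      forall i j a, D i (D j a) = D j (D i a)].

Definition dpow (D : 'I_n -> F -> F) (m : 'X_{1..n}) (a : F) : F :=
  foldr (fun i x => iter (m i) (D i) x) a (enum 'I_n).
End DiffField.

Definition diff_ext {n : nat} {F K : fieldType} (D : 'I_n -> F -> F)
  (DK : 'I_n -> K -> K) (iota : {rmorphism F -> K}) : Prop :=
  diff_field DK /\ forall i a, iota (D i a) = DK i (iota a).

(* A finite system of differential polynomial equations [ps = 0] and
   inequations [qs <> 0] in k differential unknowns y_0..y_(k-1) with
   coefficients in F: it is written with s algebraic variables, the
   variable j standing for the derivative  d^((v j).2) y_((v j).1).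
   [dsol DK iota v ps qs u] : u solves it in the extension K. *)
Definition dsol {n k s : nat} {F K : fieldType} (DK : 'I_n -> K -> K)
  (iota : F -> K) (v : 'I_s -> 'I_k * 'X_{1..n})
  (ps qs : seq {mpoly F[s]}) (u : 'I_k -> K) : Prop :=
  let val_ j := dpow DK (v j).2 (u (v j).1) in
  (forall p, p \in ps -> (map_mpoly iota p).@[val_] = 0) /\
  (forall q, q \in qs -> (map_mpoly iota q).@[val_] != 0).

(* Kolchin's definition: (F, D) is differentially closed if every finite
   system of differential polynomial equations and inequations over F
   having a solution in some differential field extension of F already
   has a solution in F. *)
Definition diff_closed {n : nat} {F : fieldType} (D : 'I_n -> F -> F) : Prop :=
  forall (k s : nat) (v : 'I_s -> 'I_k * 'X_{1..n}) (ps qs : seq {mpoly F[s]}),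
    (exists (K : fieldType) (DK : 'I_n -> K -> K) (iota : {rmorphism F -> K})
            (u : 'I_k -> K), diff_ext D DK iota /\ dsol DK iota v ps qs u) ->
    exists u : 'I_k -> F, dsol D id v ps qs u.

(* Linear differential operators with coefficients in F, in n         *)
(* variables.  An operator  sum_m a_m d^m  is stored as the polynomial *)
(* sum_m a_m 'X_[m] : {mpoly F[n]} (so addition, subtraction, left     *)
(* multiplication by a function  a  ( = a *: P ), functions a%:MP and  *)
(* the symbol calculus are those of mpoly); the composition of         *)
(* operators is given by the Leibniz rule                              *)
(*   (a d^m)(b d^m') = sum_(d <= m) C(m,d) a d^d(b) d^(m-d+m').        *)
Section Operators.
Context {n : nat} {F : fieldType} (D : 'I_n -> F -> F).

Definition opmul (P Q : {mpoly F[n]}) : {mpoly F[n]} :=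
  \sum_(m <- msupp P) \sum_(m' <- msupp Q)
    \sum_(d : 'X_{1..n < (mdeg m).+1} | (val d <= m)%MM)
      ((\prod_(i < n) 'C(m i, val d i))%:R * P@_m * dpow D (val d) Q@_m')
        *: 'X_[(m - val d + m')%MM].

Definition opcomm (A B : {mpoly F[n]}) : {mpoly F[n]} :=
  opmul A B - opmul B A.

(* order of an operator (the order of 0 is taken to be 0) *)
Definition op_order (P : {mpoly F[n]}) : nat := (msize P).-1.

Definition first_order (P : {mpoly F[n]}) : Prop := (msize P <= 2)%N.

Definition principal_symbol (P : {mpoly F[n]}) : {mpoly F[n]} :=
  \sum_(m <- msupp P | mdeg m == op_order P) P@_m *: 'X_[m].

Definition decomposable_symbol (P : {mpoly F[n]}) : Prop :=
  exists p q : {mpoly F[n]},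
    [/\ (msize p <= 2)%N, (msize q <= 2)%N & principal_symbol P = p * q].

Definition admits_Dini (X2 H : {mpoly F[n]}) (kappa rho : F) : Prop :=
  opcomm H X2 = kappa *: H + rho *: X2.

Definition Dini_result (X1 X2 H : {mpoly F[n]}) (kappa rho : F) : {mpoly F[n]} :=
  opmul X2 X1 - H + kappa *: X1 + rho%:MP.

(* L = X1 X2 - H admits the Intertwining Laplace Transformation with
   omega = -[X2, H] H^{-1} equal to the differential operator w:
   H <> 0 and, in the (domain) operator ring,  w H = -[X2, H]. *)
Definition ILT_with (X2 H w : {mpoly F[n]}) : Prop :=
  H != 0 /\ opmul w H = - opcomm X2 H.

Definition ILT_result (X1 X2 H w : {mpoly F[n]}) : {mpoly F[n]} :=
  opmul X2 X1 + opmul w X1 - H.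
End Operators.

From HB Require Import structures.
From mathcomp Require Import all_boot all_order all_algebra.
From mathcomp Require Import mpoly.
From mathcomp Require Import boolp generic_quotient fraction.
From mathcomp Require Import ring.
Set Implicit Arguments.
Unset Strict Implicit.
Unset Printing Implicit Defensive.
Import GRing.Theory.
Local Open Scope ring_scope.

(* Replacing X1, H by X1 + alpha, H + alpha X2 changes [H, X2] into
   [H, X2] - X2'(alpha) X2, where X2'(alpha) = sum_l a_l D_l alpha and a_l are the
   first-order coefficients of X2.  Hence [H + alpha X2, X2] = kappa (H + alpha X2)
   as soon as alpha solves the linear equation sum_l a_l D_l y + kappa y = rho.
   Since L has order two, some a_(i0) is nonzero; then this equation, together with
   the inequation H_(i0) + a_(i0) y <> 0 (which makes H + alpha X2 nonzero), has a
   solution in the fraction field of F[[t]] with D_(i0) extended by d/dt: a power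
   series whose coefficients are determined recursively, dividing by k + 1 in
   characteristic zero.  Differential closedness brings the solution down to F; the
   intertwining identity with omega = kappa is then the commutator relation, and
   L_1 = L_Dini is a direct computation. *)

Definition derivation (R : pzRingType) (d : R -> R) : Prop :=
  {morph d : a b / a + b} /\ forall a b, d (a * b) = d a * b + a * d b.

Section Derivation.
Variables (R : pzRingType) (d : R -> R).
Hypothesis dd : derivation d.

Lemma derivationD a b : d (a + b) = d a + d b.
Proof. by case: dd. Qed.

Lemma derivationM a b : d (a * b) = d a * b + a * d b.
Proof. by case: dd. Qed.

Lemma derivation0 : d 0 = 0.
Proof. by apply: (addrI (d 0)); rewrite -derivationD !addr0. Qed.

Lemma derivationN a : d (- a) = - d a.
Proof. by apply/eqP; rewrite -addr_eq0 -derivationD addNr derivation0. Qed.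

Lemma derivationB a b : d (a - b) = d a - d b.
Proof. by rewrite derivationD derivationN. Qed.

Lemma derivation1 : d 1 = 0.
Proof.
have := derivationM 1 1; rewrite !mulr1 mul1r => h.
by apply: (addrI (d 1)); rewrite addr0 -h.
Qed.

Lemma derivation_sum (I : Type) (r : seq I) (P : pred I) (E : I -> R) :
  d (\sum_(i <- r | P i) E i) = \sum_(i <- r | P i) d (E i).
Proof. exact: (big_morph d derivationD derivation0). Qed.

Lemma derivationMn a k : d (a *+ k) = d a *+ k.
Proof. by elim: k => [|k IHk]; rewrite ?mulr0n ?derivation0 // !mulrS derivationD IHk. Qed.
End Derivation.

Lemma diff_fieldP (n : nat) (F : fieldType) (D : 'I_n -> F -> F) :
  diff_field D <-> (forall i, derivation (D i)) /\ (forall i j a, D i (D j a) = D j (D i a)).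
Proof.
split=> [[hD hM hC]|[hd hC]]; first by split=> // i; split; [exact: hD|exact: hM].
by split=> [i|i|//]; case: (hd i).
Qed.

Section FracDerivation.
Variable R : idomainType.
Local Notation K := {fraction R}.
Local Notation "x %:F" := (@tofrac R x).
Local Open Scope quotient_scope.

Lemma frac_repr (x : K) : x = (repr x).1%:F / (repr x).2%:F.
Proof.
rewrite -[x in LHS]reprK; set r := repr x.
have hq : r.2%:F != 0 by rewrite tofrac_eq0 denom_ratioP.
apply: (mulIf hq); rewrite mulfVK //; unlock tofrac.
rewrite -[_ * _]FracField.pi_mul; apply/eqmodP => /=.
rewrite FracField.equivfE /FracField.mulf /=.
by rewrite !numden_Ratio ?oner_neq0 ?mulf_neq0 ?oner_neq0 ?denom_ratioP // !mulr1 mulrC.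
Qed.

Lemma eq_frac (a b c e : R) : b != 0 -> e != 0 ->
  (a%:F / b%:F == c%:F / e%:F) = (a * e == c * b).
Proof.
move=> hb he; have hb' : b%:F != 0 by rewrite tofrac_eq0.
have he' : e%:F != 0 by rewrite tofrac_eq0.
by rewrite eqr_div // -!rmorphM tofrac_eq.
Qed.

Lemma addf_frac (a b c e : R) : b != 0 -> e != 0 ->
  a%:F / b%:F + c%:F / e%:F = (a * e + c * b)%:F / (b * e)%:F.
Proof. by move=> hb he; rewrite addf_div ?tofrac_eq0 // rmorphD !rmorphM. Qed.

Lemma mulf_frac (a b c e : R) : a%:F / b%:F * (c%:F / e%:F) = (a * c)%:F / (b * e)%:F.
Proof. by rewrite !rmorphM invfM mulrACA. Qed.

Variable d : R -> R.
Hypothesis dd : derivation d.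

Definition fracder (x : K) : K :=
  let r := repr x in (d r.1 * r.2 - r.1 * d r.2)%:F / (r.2 * r.2)%:F.

Lemma fracderE p q : q != 0 ->
  fracder (p%:F / q%:F) = (d p * q - p * d q)%:F / (q * q)%:F.
Proof.
move=> hq; rewrite /fracder; set x := p%:F / q%:F.
set r1 := (repr x).1; set r2 := (repr x).2.
have h2 : r2 != 0 := denom_ratioP _.
have E : r1 * q = p * r2 by apply/eqP; rewrite -eq_frac // -frac_repr.
apply/eqP; rewrite eq_frac ?mulf_neq0 //; apply/eqP/eqP; rewrite -subr_eq0.
have dE : d r1 * q + r1 * d q = d p * r2 + p * d r2 by rewrite -!(derivationM dd) E.
have -> : (d r1 * r2 - r1 * d r2) * (q * q) - (d p * q - p * d q) * (r2 * r2)
  = r2 * q * (d r1 * q + r1 * d q - (d p * r2 + p * d r2))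
    - (q * d r2 + r2 * d q) * (r1 * q - p * r2) by ring.
by rewrite dE E !subrr !mulr0 subr0.
Qed.

Lemma fracder_tofrac a : fracder a%:F = (d a)%:F.
Proof.
have := fracderE a (oner_neq0 R); rewrite rmorph1 divr1 => ->.
by rewrite (derivation1 dd) mulr1 mulr0 subr0 mulr1 rmorph1 divr1.
Qed.

Lemma fracder_derivation : derivation fracder.
Proof.
split=> x y; rewrite [x]frac_repr [y]frac_repr;
  case: (repr x) (repr y) => [[p q] /= hq] [[p' q'] /= hq'].
- rewrite addf_frac // !fracderE ?mulf_neq0 // addf_frac ?mulf_neq0 //.
  apply/eqP; rewrite eq_frac ?mulf_neq0 //; apply/eqP.
  by rewrite (derivationD dd) !(derivationM dd); ring.
- rewrite mulf_frac !fracderE ?mulf_neq0 // !mulf_frac addf_frac ?mulf_neq0 //.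
  apply/eqP; rewrite eq_frac ?mulf_neq0 //; apply/eqP.
  by rewrite !(derivationM dd); ring.
Qed.
End FracDerivation.

Lemma fracder_comm (R : idomainType) (d e : R -> R) :
  derivation d -> derivation e -> (forall a, d (e a) = e (d a)) ->
  forall x : {fraction R}, fracder d (fracder e x) = fracder e (fracder d x).
Proof.
move=> dd de hde x; rewrite [x]frac_repr; case: (repr x) => [[p q] /= hq].
rewrite !fracderE ?mulf_neq0 //; apply/eqP; rewrite eq_frac ?mulf_neq0 //; apply/eqP.
by rewrite ?(derivationB dd) ?(derivationB de) ?(derivationM dd) ?(derivationM de) ?hde; ring.
Qed.

Section FormalPowerSeries.
Variable R : idomainType.

Record fps := FPS { fpscoef : nat -> R }.
HB.instance Definition _ := gen_eqMixin fps.
HB.instance Definition _ := gen_choiceMixin fps.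

Lemma fpsP (f g : fps) : (forall k, fpscoef f k = fpscoef g k) -> f = g.
Proof. by case: f; case: g => a b h; congr FPS; apply: funext => k. Qed.

Definition fps_trunc (k : nat) (f : fps) : {poly R} := \poly_(i < k.+1) fpscoef f i.

Lemma coefM_take_poly k (A B : {poly R}) :
  (A * B)`_k = (take_poly k.+1 A * take_poly k.+1 B)`_k.
Proof.
rewrite !coefM; apply: eq_bigr => i _.
by rewrite !coef_take_poly ltn_ord (leq_ltn_trans (leq_subr _ _)).
Qed.

Lemma coefM_take_polyl k (A B : {poly R}) : (take_poly k.+1 A * B)`_k = (A * B)`_k.
Proof.
rewrite coefM_take_poly [RHS]coefM_take_poly.
suff -> : take_poly k.+1 (take_poly k.+1 A) = take_poly k.+1 A by [].
by apply/polyP => i; rewrite !coef_take_poly; case: (i < k.+1)%N.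
Qed.

Lemma coefM_take_polyr k (A B : {poly R}) : (A * take_poly k.+1 B)`_k = (A * B)`_k.
Proof. by rewrite mulrC coefM_take_polyl mulrC. Qed.

Lemma take_fps_trunc j k f : (j <= k)%N -> take_poly j.+1 (fps_trunc k f) = fps_trunc j f.
Proof.
move=> hjk; apply/polyP => i; rewrite coef_take_poly !coef_poly.
by case: ifP => // hij; rewrite (leq_trans hij).
Qed.

Definition fps_add f g := FPS (fun k => fpscoef f k + fpscoef g k).
Definition fps_mul f g := FPS (fun k => (fps_trunc k f * fps_trunc k g)`_k).

Lemma fps_addA : associative fps_add.
Proof. by move=> f g h; apply: fpsP => k /=; rewrite addrA. Qed.
Lemma fps_addC : commutative fps_add.
Proof. by move=> f g; apply: fpsP => k /=; rewrite addrC. Qed.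
Lemma fps_add0 : left_id (FPS (fun _ => 0)) fps_add.
Proof. by move=> f; apply: fpsP => k /=; rewrite add0r. Qed.
Lemma fps_addN :
  left_inverse (FPS (fun _ => 0)) (fun f => FPS (fun k => - fpscoef f k)) fps_add.
Proof. by move=> f; apply: fpsP => k /=; rewrite addNr. Qed.

HB.instance Definition _ := GRing.isZmodule.Build fps fps_addA fps_addC fps_add0 fps_addN.

Lemma fpscoefD f g k : fpscoef (f + g) k = fpscoef f k + fpscoef g k.
Proof. by []. Qed.

Lemma fpscoef_sum (I : Type) (r : seq I) (P : pred I) (G : I -> fps) k :
  fpscoef (\sum_(i <- r | P i) G i) k = \sum_(i <- r | P i) fpscoef (G i) k.
Proof. exact: (big_morph (fpscoef^~ k)). Qed.

Lemma fps_trunc_mul k f g :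
  fps_trunc k (fps_mul f g) = take_poly k.+1 (fps_trunc k f * fps_trunc k g).
Proof.
apply/polyP => i; rewrite coef_take_poly coef_poly /=.
by case: ifP => // hik; rewrite [RHS]coefM_take_poly !take_fps_trunc.
Qed.

Lemma fps_mulA : associative fps_mul.
Proof.
move=> f g h; apply: fpsP => k /=.
by rewrite !fps_trunc_mul coefM_take_polyl coefM_take_polyr mulrA.
Qed.

Lemma fps_mulC : commutative fps_mul.
Proof. by move=> f g; apply: fpsP => k /=; rewrite mulrC. Qed.

Lemma fps_mul1 : left_id (FPS (fun k => (k == 0)%:R)) fps_mul.
Proof.
move=> f; apply: fpsP => k /=.
have -> : fps_trunc k (FPS (fun k => (k == 0)%:R)) = 1.
  by apply/polyP => -[|i]; rewrite coef_poly coefC //=; case: ifP.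
by rewrite mul1r coef_poly ltnSn.
Qed.

Lemma fps_mulDl : left_distributive fps_mul fps_add.
Proof.
move=> f g h; apply: fpsP => k /=; rewrite -coefD -mulrDl.
suff -> : fps_trunc k (fps_add f g) = fps_trunc k f + fps_trunc k g by [].
by apply/polyP => i; rewrite coefD !coef_poly; case: ifP; rewrite ?addr0.
Qed.

Lemma fps_oner_neq0 : FPS (fun k => (k == 0)%:R) != FPS (fun _ => 0).
Proof. by apply/eqP => /(congr1 (fpscoef^~ 0%N)) /eqP; rewrite oner_eq0. Qed.

HB.instance Definition _ := GRing.Zmodule_isComNzRing.Build fps
  fps_mulA fps_mulC fps_mul1 fps_mulDl fps_oner_neq0.

Lemma fpscoefM f g k : fpscoef (f * g) k = \sum_(i < k.+1) fpscoef f i * fpscoef g (k - i).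
Proof.
rewrite /= coefM; apply: eq_bigr => i _.
by rewrite !coef_poly ltn_ord (leq_ltn_trans (leq_subr _ _)).
Qed.

(* Units are chosen classically; only the integral domain structure matters. *)
Definition fps_unit : pred fps := fun f => `[< exists g, g * f = 1 >].
Definition fps_inv (f : fps) : fps :=
  if pselect (exists g, g * f = 1) is left h then projT1 (cid h) else f.

Lemma fps_mulV : {in fps_unit, left_inverse 1 fps_inv *%R}.
Proof.
move=> f /asboolP hf; rewrite /fps_inv; case: pselect => // h.
exact: projT2 (cid h).
Qed.

Lemma fps_unitP (f g : fps) : g * f = 1 -> fps_unit f.
Proof. by move=> h; apply/asboolP; exists g. Qed.

Lemma fps_inv_out : {in [predC fps_unit], fps_inv =1 id}.
Proof.
move=> f /negP hf; rewrite /fps_inv; case: pselect => // h.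
by case: hf; apply/asboolP.
Qed.

HB.instance Definition _ := GRing.ComNzRing_hasMulInverse.Build fps
  fps_mulV fps_unitP fps_inv_out.

Lemma fps_neq0 (f : fps) : f != 0 -> exists k, fpscoef f k != 0.
Proof.
move=> hf; case: (pselect (exists k, fpscoef f k != 0)) => // hno.
case/eqP: hf; apply: fpsP => k; apply/eqP/negPn/negP => hk.
by case: hno; exists k.
Qed.

(* The product of the lowest nonzero coefficients is the lowest coefficient of the product. *)
Lemma fps_idomain : GRing.integral_domain_axiom fps.
Proof.
move=> f g hfg; apply/norP => -[/fps_neq0 hf /fps_neq0 hg].
case: (ex_minnP hf) => a ha amin; case: (ex_minnP hg) => b hb bmin.
have := congr1 (fpscoef^~ (a + b)%N) hfg; rewrite fpscoefM.
have ha' : (a < (a + b).+1)%N by rewrite ltnS leq_addr.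
rewrite (bigD1 (Ordinal ha')) //= addKn big1 ?addr0.
  by move/eqP; rewrite mulf_eq0 (negPf ha) (negPf hb).
move=> l hl; have hl' : nat_of_ord l != a by apply: contra hl => /eqP h; apply/eqP/val_inj.
case: (ltngtP l a) => hla; last by rewrite hla eqxx in hl'.
  have hfl : fpscoef f l = 0 by apply/eqP; apply: contraTT hla => /amin; rewrite -leqNgt.
  by rewrite hfl mul0r.
have hlab : (l <= a + b)%N by rewrite -ltnS ltn_ord.
have hlt : (a + b - l < b)%N by rewrite ltn_subLR // ltn_add2r.
have hgl : fpscoef g (a + b - l) = 0.
  by apply/eqP; apply: contraTT hlt => /bmin; rewrite -leqNgt.
by rewrite hgl mulr0.
Qed.

HB.instance Definition _ := GRing.ComUnitRing_isIntegral.Build fps fps_idomain.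

Definition fpsC (a : R) : fps := FPS (fun k => if k == 0%N then a else 0).
Arguments fpsC : simpl never.

Lemma fpsC_zmod : zmod_morphism fpsC.
Proof. by move=> x y; apply: fpsP => -[|k] /=; rewrite /fpsC /= ?subr0. Qed.

Lemma fps_truncC k a : fps_trunc k (fpsC a) = a%:P.
Proof. by apply/polyP => -[|i]; rewrite coef_poly coefC //=; case: ifP. Qed.

Lemma fpsC_monoid : monoid_morphism fpsC.
Proof.
split=> [|x y]; apply: fpsP => k /=; first by rewrite /fpsC; case: k.
by rewrite !fps_truncC -polyCM coefC /fpsC; case: k.
Qed.

HB.instance Definition _ := GRing.isZmodMorphism.Build R fps fpsC fpsC_zmod.
HB.instance Definition _ := GRing.isMonoidMorphism.Build R fps fpsC fpsC_monoid.

Lemma fpscoefCM a f k : fpscoef (fpsC a * f) k = a * fpscoef f k.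
Proof. by rewrite fpscoefM big_ord_recl /= subn0 big1 ?addr0 // => i _; rewrite mul0r. Qed.

Definition fps_map (d : R -> R) (f : fps) : fps := FPS (d \o fpscoef f).

Definition fps_deriv (f : fps) : fps := FPS (fun k => fpscoef f k.+1 *+ k.+1).

Lemma fps_map_derivation d : derivation d -> derivation (fps_map d).
Proof.
move=> dd; split=> f g; apply: fpsP => k; first exact: derivationD.
transitivity (d (fpscoef (f * g) k)); first by [].
rewrite fpscoefD !fpscoefM (derivation_sum dd) -big_split /=.
by under eq_bigr do rewrite (derivationM dd).
Qed.

Lemma fps_trunc_deriv k f : take_poly k.+1 (fps_trunc k.+1 f)^`() = fps_trunc k (fps_deriv f).
Proof.
apply/polyP => i; rewrite coef_take_poly coef_deriv !coef_poly /=.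
by rewrite !ltnS; case: (i <= k)%N.
Qed.

Lemma fps_deriv_derivation : derivation fps_deriv.
Proof.
split=> f g; apply: fpsP => k; first by rewrite /= mulrnDl.
transitivity (((fps_trunc k.+1 f * fps_trunc k.+1 g)^`())`_k); first by rewrite coef_deriv.
rewrite derivM coefD fpscoefD.
rewrite [(_^`() * _)`_k]coefM_take_poly [(_ * _^`())`_k]coefM_take_poly.
by rewrite !fps_trunc_deriv !take_fps_trunc.
Qed.

Lemma fps_map_deriv d : derivation d ->
  forall f, fps_map d (fps_deriv f) = fps_deriv (fps_map d f).
Proof. by move=> dd f; apply: fpsP => k /=; rewrite (derivationMn dd). Qed.

Lemma fps_derivC a : fps_deriv (fpsC a) = 0.
Proof. by apply: fpsP => k; rewrite /= mul0rn. Qed.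

Lemma fps_mapC d a : d 0 = 0 -> fps_map d (fpsC a) = fpsC (d a).
Proof. by move=> d0; apply: fpsP => -[|k]; rewrite /fps_map /fpsC /=. Qed.
End FormalPowerSeries.

Section DiffExtension.
Variables (n : nat) (F : fieldType) (D : 'I_n -> F -> F) (i0 : 'I_n).
Hypothesis hD : diff_field D.

Let hder : forall j, derivation (D j). Proof. by case/diff_fieldP: hD. Qed.

(* Substituting x_(i0) + t for x_(i0): the i0-th derivation also differentiates in t. *)
Definition fps_der (j : 'I_n) (f : fps F) : fps F :=
  fps_map (D j) f + (if j == i0 then fps_deriv f else 0).

Lemma fpscoef_der j f k : fpscoef (fps_der j f) k =
  D j (fpscoef f k) + (if j == i0 then fpscoef f k.+1 *+ k.+1 else 0).
Proof. by rewrite /fps_der fpscoefD; case: (j == i0). Qed.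

Lemma fps_der_derivation j : derivation (fps_der j).
Proof.
have [mD mM] := fps_map_derivation (hder j); have [tD tM] := @fps_deriv_derivation F.
split=> f g; rewrite /fps_der ?mD ?mM; case: (j == i0); rewrite ?addr0 //.
  by rewrite tD addrACA.
by rewrite tM mulrDl mulrDr addrACA.
Qed.

Lemma fps_der_comm j l f : fps_der j (fps_der l f) = fps_der l (fps_der j f).
Proof.
have mapC j' l' g : fps_map (D j') (fps_map (D l') g) = fps_map (D l') (fps_map (D j') g).
  by apply: fpsP => k /=; case/diff_fieldP: hD => _ ->.
rewrite /fps_der; have [mD _] := fps_map_derivation (hder j).
have [mD' _] := fps_map_derivation (hder l).
case: (eqVneq j i0) => [->|hj]; case: (eqVneq l i0) => [->|hl];
  rewrite ?eqxx ?(negPf hj) ?(negPf hl) ?addr0 //.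
- by rewrite mD' mapC (fps_map_deriv (hder l)).
- by rewrite mD mapC (fps_map_deriv (hder j)).
Qed.

Definition ext_der (j : 'I_n) : {fraction fps F} -> {fraction fps F} :=
  fracder (fps_der j).

Definition fps_fracC := (@tofrac (fps F)) \o (@fpsC F).

Lemma ext_der_tofrac j f : ext_der j (tofrac f) = tofrac (fps_der j f).
Proof. exact: fracder_tofrac (fps_der_derivation j) f. Qed.

Lemma fraction_fps_diff_ext : diff_ext D ext_der fps_fracC.
Proof.
split.
  apply/diff_fieldP; split=> [j|j l x]; first exact/fracder_derivation/fps_der_derivation.
  by apply: fracder_comm; [exact: fps_der_derivation..|exact: fps_der_comm].
move=> j a; rewrite /fps_fracC /= ext_der_tofrac /fps_der.
rewrite fps_mapC ?(derivation0 (hder j)) //.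
by case: (j == i0); rewrite ?fps_derivC addr0.
Qed.
End DiffExtension.

Section SeriesSolution.
Variables (n : nat) (F : fieldType) (D : 'I_n -> F -> F) (i0 : 'I_n).
Hypothesis hchar : [pchar F] =i pred0.
Variables (a : 'I_n -> F) (kappa rho c0 : F).
Hypothesis ha : a i0 != 0.

(* Comparing the coefficients of t^k in sum_l a_l D_l y + kappa y = rho. *)
Fixpoint sol_coef (k : nat) : F :=
  if k is k'.+1 then
    (rho * (k' == 0%N)%:R - kappa * sol_coef k' - \sum_(l < n) a l * D l (sol_coef k'))
      / (a i0 * k'.+1%:R)
  else c0.

Definition sol_fps : fps F := FPS sol_coef.

Lemma sol_fps_solves :
  \sum_(l < n) fpsC (a l) * fps_der D i0 l sol_fps + fpsC kappa * sol_fps = fpsC rho.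
Proof.
apply: fpsP => k; rewrite fpscoefD fpscoef_sum fpscoefCM.
under eq_bigr => l _ do rewrite fpscoefCM fpscoef_der mulrDr.
rewrite big_split /=; set S := \sum_(l < n) a l * D l (sol_coef k).
rewrite (bigD1 i0) //= eqxx big1 ?addr0; last first.
  by move=> l /negPf ->; rewrite mulr0.
have hk : k.+1%:R != 0 :> F by have /pcharf0P -> := hchar.
have -> : (if k == 0%N then rho else 0) = rho * (k == 0%N)%:R.
  by case: (k == 0%N); rewrite ?mulr1 ?mulr0.
by rewrite -mulr_natr; field; rewrite nat1r hk ha.
Qed.
End SeriesSolution.

Section Dpow.
Variables (n : nat) (K : fieldType) (DK : 'I_n -> K -> K).

Lemma dpow0 x : dpow DK 0%MM x = x.
Proof. by rewrite /dpow; elim: (enum 'I_n) => //= i r ->; rewrite mnm0E. Qed.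

Lemma dpow1 l x : dpow DK U_(l)%MM x = DK l x.
Proof.
rewrite /dpow; have : uniq (enum 'I_n) := enum_uniq _.
have : l \in enum 'I_n := mem_enum _ l.
elim: (enum 'I_n) => [|i r IHr] //= hl /andP[hi hr].
rewrite mnm1E; case: (eqVneq l i) => [eli|hli] /=; last first.
  by rewrite IHr //; move: hl; rewrite inE (negPf hli).
subst i; congr (DK l _); elim: r hi {IHr hr hl} => [|j r IHr] //=.
by rewrite inE negb_or mnm1E => /andP[/negPf -> /IHr ->].
Qed.
End Dpow.

(* The equation sum_l a_l D_l y + kappa y = rho and the inequation h + c y <> 0,
   in the algebraic variables 0 for y and lift 0 l for D_l y. *)
Section FirstOrderSystem.
Variables (n : nat) (F : fieldType) (a : 'I_n -> F) (kappa rho h c : F).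

Definition fo_vars (j : 'I_n.+1) : 'I_1 * 'X_{1..n} :=
  (ord0, if unlift ord0 j is Some l then U_(l)%MM else 0%MM).

Definition fo_eqn : {mpoly F[n.+1]} :=
  \sum_(l < n) a l *: 'X_(lift ord0 l) + kappa *: 'X_ord0 - rho%:MP.

Definition fo_ineqn : {mpoly F[n.+1]} := h%:MP + c *: 'X_ord0.

Variables (K : fieldType) (DK : 'I_n -> K -> K) (iota : {rmorphism F -> K}) (u : 'I_1 -> K).
Let val_ (j : 'I_n.+1) := dpow DK (fo_vars j).2 (u (fo_vars j).1).

Let mapD : {morph map_mpoly (n := n.+1) iota : p q / p + q}.
Proof. exact: raddfD. Qed.

Lemma eval_fo_eqn : (map_mpoly iota fo_eqn).@[val_] =
  \sum_(l < n) iota (a l) * DK l (u ord0) + iota kappa * u ord0 - iota rho.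
Proof.
have val0 : val_ ord0 = u ord0 by rewrite /val_ /fo_vars unlift_none dpow0.
rewrite /fo_eqn !mapD (big_morph _ mapD (raddf0 _)) -mpolyCN !map_mpolyC.
rewrite !mevalD mevalC map_mpolyZ map_mpolyX mevalZ mevalXU val0.
rewrite (big_morph _ (mevalD val_) (meval0 val_)).
congr (_ + _ + _); last exact: raddfN.
apply: eq_bigr => l _; rewrite map_mpolyZ map_mpolyX mevalZ mevalXU.
by rewrite /val_ /fo_vars /= liftK dpow1.
Qed.

Lemma eval_fo_ineqn : (map_mpoly iota fo_ineqn).@[val_] = iota h + iota c * u ord0.
Proof.
rewrite /fo_ineqn mapD map_mpolyC map_mpolyZ map_mpolyX.
by rewrite mevalD mevalC mevalZ mevalXU /val_ /fo_vars unlift_none dpow0.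
Qed.
End FirstOrderSystem.

(* The system is solved in the fraction field of F[[t]] by the series solution, whose
   constant term is chosen to satisfy the inequation; differential closedness brings the
   solution down to F. *)
Lemma first_order_pde_solvable (n : nat) (F : fieldType) (D : 'I_n -> F -> F)
    (i0 : 'I_n) (a : 'I_n -> F) (kappa rho h c : F) :
  [pchar F] =i pred0 -> diff_field D -> diff_closed D -> a i0 != 0 -> c != 0 ->
  exists y : F, \sum_(l < n) a l * D l y + kappa * y = rho /\ h + c * y != 0.
Proof.
move=> hchar hD hclosed ha hc.
pose s := tofrac (sol_fps D i0 a kappa rho ((1 - h) / c)).
have [|u [/(_ _ (mem_head _ _)) hp /(_ _ (mem_head _ _)) hq]] :=
  @hclosed 1 n.+1 (@fo_vars n) [:: fo_eqn a kappa rho] [:: fo_ineqn n h c].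
  exists {fraction fps F}, (ext_der D i0), (@fps_fracC F), (fun _ => s).
  split; first exact: fraction_fps_diff_ext.
  split=> p; rewrite inE => /eqP ->.
    have /= -> := eval_fo_eqn a kappa rho (ext_der D i0) (@fps_fracC F) (fun _ => s).
    apply/eqP; rewrite subr_eq0; apply/eqP.
    rewrite /fps_fracC /= -(sol_fps_solves D hchar kappa rho ((1 - h) / c) ha).
    rewrite rmorphD rmorph_sum rmorphM /=; congr (_ + _).
    by apply: eq_bigr => l _; rewrite rmorphM ext_der_tofrac.
  have /= -> := eval_fo_ineqn h c (ext_der D i0) (@fps_fracC F) (fun _ => s).
  rewrite /fps_fracC /= -!rmorphM -rmorphD tofrac_eq0.
  apply/eqP => /(congr1 (fun f => fpscoef f 0)); rewrite fpscoefD fpscoefCM /=.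
  by rewrite /fpsC /= mulrC divfK // addrC subrK => /eqP; rewrite oner_eq0.
exists (u ord0); move: hp hq.
have /= -> := eval_fo_eqn a kappa rho D (idfun : {rmorphism F -> F}) u.
have /= -> := eval_fo_ineqn h c D (idfun : {rmorphism F -> F}) u.
by move=> /eqP; rewrite subr_eq0 => /eqP.
Qed.

Section DivisorsOfFirstOrderMonomials.
Variable n : nat.
Implicit Types (d : 'X_{1..n}).

Lemma lepm0 d : (d <= 0)%MM -> d = 0%MM.
Proof.
move/mnm_lepP => h; apply/mnmP => i; rewrite mnm0E.
by apply/eqP; rewrite -leqn0 -(mnm0E i) h.
Qed.

Lemma lepm1 d l : (d <= U_(l))%MM -> d = 0%MM \/ d = U_(l)%MM.
Proof.
move/mnm_lepP => h; have hle i : (i != l) -> d i = 0%N.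
  by move=> hil; apply/eqP; rewrite -leqn0; have := h i; rewrite mnm1E eq_sym (negPf hil).
case: (eqVneq (d l) 0%N) => hl; [left|right]; apply/mnmP => i.
  by rewrite mnm0E; case: (eqVneq i l) => [->|/hle].
rewrite mnm1E; case: (eqVneq l i) => [<-|hli] /=; last by rewrite hle // eq_sym.
by have := h l; rewrite mnm1E eqxx => hdl; apply/eqP; rewrite eqn_leq hdl lt0n.
Qed.

Variable V : nmodType.

Lemma big_lepm0 (G : 'X_{1..n} -> V) :
  \sum_(d : 'X_{1..n < (mdeg (0%MM : 'X_{1..n})).+1} | (val d <= 0)%MM) G (val d) = G 0%MM.
Proof.
rewrite (bigD1 bm0) /= ?lepm_refl // big1 ?addr0 // => d /andP[/lepm0 hd hne].
by case/eqP: hne; apply: val_inj; rewrite /= hd.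
Qed.

Lemma big_lepm1 l (G : 'X_{1..n} -> V) :
  \sum_(d : 'X_{1..n < (mdeg (U_(l) : 'X_{1..n})).+1} | (val d <= U_(l))%MM) G (val d)
  = G 0%MM + G U_(l)%MM.
Proof.
have h0 : (bmnm (@bm0 n (mdeg (U_(l) : 'X_{1..n}))) <= U_(l))%MM.
  by apply/mnm_lepP => i; rewrite mnm0E.
pose bU := BMultinom (ltnSn (mdeg (U_(l) : 'X_{1..n}))).
rewrite (bigD1 bm0) //= (bigD1 bU) /=; last first.
  rewrite lepm_refl /=; apply/eqP => /(congr1 val) /= h.
  by have := mnm1_eq0 l; rewrite h eqxx.
rewrite big1 ?addr0 // => d /andP[/andP[/lepm1 [hd|hd] hne0] hneU].
  by case/eqP: hne0; apply: val_inj; rewrite /= hd.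
by case/eqP: hneU; apply: val_inj; rewrite /= hd.
Qed.
End DivisorsOfFirstOrderMonomials.

Section FirstOrderOperators.
Variables (n : nat) (F : fieldType) (D : 'I_n -> F -> F).
Implicit Types (P Q : {mpoly F[n]}) (c : F).

Definition coefder (l : 'I_n) Q : {mpoly F[n]} := \sum_(m <- msupp Q) D l Q@_m *: 'X_[m].

Definition deriv_along P (f : F) : F := \sum_(l < n) P@_U_(l) * D l f.

Lemma first_orderD P Q : first_order P -> first_order Q -> first_order (P + Q).
Proof. by move=> hP hQ; rewrite /first_order (leq_trans (msizeD_le _ _)) // geq_max hP. Qed.

Lemma first_orderZ c P : first_order P -> first_order (c *: P).
Proof. exact/leq_trans/msizeZ_le. Qed.

Lemma first_orderC c : first_order (c%:MP : {mpoly F[n]}).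
Proof. by rewrite /first_order msizeC; case: (c != 0). Qed.

Lemma first_order_coef m P : first_order P -> P@_m != 0 -> (mdeg m <= 1)%N.
Proof. by move=> hP; rewrite -mcoeff_msupp => /msize_mdeg_lt/leq_trans/(_ hP). Qed.

Lemma first_orderN P : first_order P -> first_order (- P).
Proof. by rewrite /first_order msizeN. Qed.

Lemma first_order_const P : first_order P -> (forall l, P@_U_(l) = 0) -> P = (P@_0%MM)%:MP.
Proof.
move=> hP hU; apply/mpolyP => m; rewrite mcoeffC.
case: (eqVneq m 0%MM) => [->|hm]; first by rewrite mulr1.
rewrite mulr0; apply/eqP/negPn/negP => hPm; move: (first_order_coef hP hPm).
rewrite leq_eqVlt ltnS leqn0 mdeg_eq0 (negPf hm) orbF => /mdeg1P[l /eqP ml].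
by move: hPm; rewrite ml hU eqxx.
Qed.

Lemma leibniz_term_first_order P Q m m' : (mdeg m <= 1)%N ->
  \sum_(d : 'X_{1..n < (mdeg m).+1} | (val d <= m)%MM)
      ((\prod_(i < n) 'C(m i, val d i))%:R * P@_m * dpow D (val d) Q@_m')
        *: 'X_[(m - val d + m')%MM]
  = (P@_m * Q@_m') *: 'X_[m + m']
    + \sum_(l < n) ((m == U_(l)%MM)%:R * P@_m * D l Q@_m') *: 'X_[m'].
Proof.
have binm0 (k : 'X_{1..n}) : (\prod_(i < n) 'C(k i, (0%MM : 'X_{1..n}) i))%N = 1%N.
  by rewrite big1 // => i _; rewrite mnm0E bin0.
rewrite leq_eqVlt ltnS leqn0 mdeg_eq0 => /orP[/mdeg1P [l /eqP ->]|/eqP ->].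
  have /= -> := big_lepm1 l (fun d => ((\prod_(i < n) 'C(U_(l)%MM i, d i))%:R *
    P@_U_(l) * dpow D d Q@_m') *: 'X_[(U_(l) - d + m')%MM]).
  rewrite binm0 big1 => [|i _]; last by rewrite binn.
  rewrite (bigD1 l) //= eqxx big1 => [|j hj]; last first.
    by rewrite eq_mnm1 eq_sym (negPf hj) !mul0r scale0r.
  have -> : (U_(l) - U_(l))%MM = 0%MM by apply/mnmP => i; rewrite mnmBE mnm0E subnn.
  by rewrite dpow0 dpow1 subm0 add0m !mul1r addr0.
have /= -> := big_lepm0 (fun d => ((\prod_(i < n) 'C((0%MM : 'X_{1..n}) i, d i))%:R *
  P@_0%MM * dpow D d Q@_m') *: 'X_[(0%MM - d + m')%MM]).
rewrite binm0 big1 ?addr0 => [|j _]; last by rewrite eq_sym mnm1_eq0 !mul0r scale0r.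
by rewrite dpow0 subm0 !mul1r.
Qed.

Lemma opmul_first_order P Q : first_order P ->
  opmul D P Q = P * Q + \sum_(l < n) P@_U_(l) *: coefder l Q.
Proof.
move=> hP; rewrite /opmul (eq_big_seq (fun m => \sum_(m' <- msupp Q)
   ((P@_m * Q@_m') *: 'X_[m + m']
    + \sum_(l < n) ((m == U_(l)%MM)%:R * P@_m * D l Q@_m') *: 'X_[m']))); last first.
  move=> m; rewrite mcoeff_msupp => hm; apply: eq_bigr => m' _.
  exact/leibniz_term_first_order/(first_order_coef hP).
under eq_bigr do rewrite big_split /=.
rewrite big_split /= mpolyME big_allpairs; congr (_ + _).
under eq_bigr do rewrite exchange_big /=.
rewrite exchange_big /=; apply: eq_bigr => l _.
rewrite /coefder scaler_sumr exchange_big /=; apply: eq_bigr => m' _.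
rewrite scalerA -scaler_suml -mulr_suml; congr (_ *: _); congr (_ * _).
rewrite [in RHS](mpolyE P) raddf_sum /=.
by apply: eq_bigr => m _; rewrite mcoeffZ mcoeffX mulrC.
Qed.
End FirstOrderOperators.

Arguments first_orderC {n F} c.

Section OperatorCalculus.
Variables (n : nat) (F : fieldType) (D : 'I_n -> F -> F).
Hypothesis hD : diff_field D.
Implicit Types (P Q : {mpoly F[n]}) (c : F).

Let hder : forall l, derivation (D l). Proof. by case/diff_fieldP: hD. Qed.

Lemma mcoeff_coefder l Q m : (coefder D l Q)@_m = D l Q@_m.
Proof.
rewrite /coefder raddf_sum /=.
under eq_bigr do rewrite mcoeffZ mcoeffX.
case: (boolP (m \in msupp Q)) => hm.
  rewrite (bigD1_seq m) ?msupp_uniq //= eqxx mulr1 big1 ?addr0 // => m' hm'.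
  by rewrite (negPf hm') mulr0.
rewrite big1_seq => [|m' /andP[_ hm']]; last first.
  by case: eqP => [e|_]; [rewrite -e hm' in hm|rewrite mulr0].
by move: hm; rewrite mcoeff_msupp negbK => /eqP ->; rewrite (derivation0 (hder l)).
Qed.

Lemma coefderD l P Q : coefder D l (P + Q) = coefder D l P + coefder D l Q.
Proof.
by apply/mpolyP => m; rewrite mcoeffD !mcoeff_coefder mcoeffD (derivationD (hder l)).
Qed.

Lemma coefderZ l c Q : coefder D l (c *: Q) = D l c *: Q + c *: coefder D l Q.
Proof.
apply/mpolyP => m; rewrite mcoeffD !mcoeffZ !mcoeff_coefder mcoeffZ.
exact: derivationM.
Qed.

Lemma coefder1 l : coefder D l 1 = 0.
Proof.
apply/mpolyP => m; rewrite mcoeff_coefder mcoeff0 mcoeff1.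
by case: (m == 0%MM); rewrite ?(derivation1 (hder l)) ?(derivation0 (hder l)).
Qed.

Lemma opmulCl c Q : opmul D c%:MP Q = c *: Q.
Proof.
rewrite opmul_first_order; last exact: first_orderC.
rewrite mul_mpolyC big1 ?addr0 // => l _.
by rewrite mcoeffC mnm1_eq0 mulr0 scale0r.
Qed.

Lemma opmulDl P P' Q : first_order P -> first_order P' ->
  opmul D (P + P') Q = opmul D P Q + opmul D P' Q.
Proof.
move=> hP hP'; have hPP' := first_orderD hP hP'.
rewrite !opmul_first_order // mulrDl addrACA -big_split /=.
by congr (_ + _); apply: eq_bigr => l _; rewrite mcoeffD scalerDl.
Qed.

Lemma opmulZl c P Q : first_order P -> opmul D (c *: P) Q = c *: opmul D P Q.
Proof.
move=> hP; have hcP := first_orderZ c hP.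
rewrite !opmul_first_order // scalerDr -scalerAl scaler_sumr.
by congr (_ + _); apply: eq_bigr => l _; rewrite mcoeffZ scalerA.
Qed.

Lemma opmulDr P Q Q' : first_order P -> opmul D P (Q + Q') = opmul D P Q + opmul D P Q'.
Proof.
move=> hP; rewrite !opmul_first_order // mulrDr addrACA -big_split /=.
by congr (_ + _); apply: eq_bigr => l _; rewrite coefderD scalerDr.
Qed.

Lemma opmulZr c P Q : first_order P ->
  opmul D P (c *: Q) = c *: opmul D P Q + deriv_along D P c *: Q.
Proof.
move=> hP; rewrite !opmul_first_order // scalerDr -scalerAr -addrA; congr (_ + _).
rewrite scaler_sumr /deriv_along scaler_suml -big_split /=; apply: eq_bigr => l _.
by rewrite coefderZ scalerDr !scalerA addrC [c * _]mulrC.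
Qed.

Lemma opmulCr c P : first_order P ->
  opmul D P c%:MP = c *: P + (deriv_along D P c)%:MP.
Proof.
move=> hP; rewrite -alg_mpolyC opmulZr // -alg_mpolyC opmul_first_order // mulr1.
by rewrite big1 ?addr0 // => l _; rewrite coefder1 scaler0.
Qed.
End OperatorCalculus.

Section SecondOrderFactorization.
Variables (n : nat) (F : fieldType) (D : 'I_n -> F -> F).
Hypothesis hD : diff_field D.
Variables (X1 X2 H : {mpoly F[n]}).
Hypotheses (hX1 : first_order X1) (hX2 : first_order X2) (hH : first_order H).

(* Otherwise X2 is a function and X1 X2 - H has order at most one. *)
Lemma right_factor_nonconst :
  op_order (opmul D X1 X2 - H) = 2%N -> exists i0, X2@_U_(i0) != 0.
Proof.
move=> hL2; apply/existsP; apply: contraT; rewrite negb_exists => /forallP hU.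
have /(first_order_const hX2) eX2 : forall l, X2@_U_(l) = 0.
  by move=> l; apply/eqP/negPn/hU.
have : first_order (opmul D X1 X2 - H).
  rewrite eX2 opmulCr //; apply/first_orderD/first_orderN => //.
  by apply/first_orderD; [exact: first_orderZ|exact: first_orderC].
by rewrite /first_order; move: hL2; rewrite /op_order; case: (msize _) => [|[|[|k]]].
Qed.

Lemma opcomm_shift alpha :
  opcomm D (H + alpha *: X2) X2 = opcomm D H X2 - deriv_along D X2 alpha *: X2.
Proof.
have hZ := first_orderZ alpha hX2.
rewrite /opcomm opmulDl // opmulZl // opmulDr // opmulZr //.
ring.
Qed.
End SecondOrderFactorization.

Theorem theorem2 (n : nat) (F : fieldType) (D : 'I_n -> F -> F)
  (hchar : [pchar F] =i pred0)
  (hD : diff_field D) (hclosed : diff_closed D)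
  (X1 X2 H : {mpoly F[n]}) (kappa rho : F)
  (hX1 : first_order X1) (hX2 : first_order X2) (hH : first_order H)
  (hL2 : op_order (opmul D X1 X2 - H) = 2%N)
  (hLdec : decomposable_symbol (opmul D X1 X2 - H))
  (hDini : admits_Dini D X2 H kappa rho) :
  exists alpha : F,
    let tX1 := X1 + alpha%:MP in
    let tH := H + alpha *: X2 in
    let psi := kappa in
    [/\ opmul D tX1 X2 - tH = opmul D X1 X2 - H,
        opcomm D tH X2 = psi *: tH,
        ILT_with D X2 tH psi%:MP &
        ILT_result D tX1 X2 tH psi%:MP = Dini_result D X1 X2 H kappa rho].
Proof.
have [i0 hi0] := right_factor_nonconst hD hX1 hX2 hH hL2.
have [alpha [hsol hne]] := first_order_pde_solvable (a := fun l => X2@_U_(l)) kappa rho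
  (H@_U_(i0)) hchar hD hclosed hi0 hi0.
rewrite -/(deriv_along D X2 alpha) in hsol.
exists alpha => tX1 tH psi.
have hcomm : opcomm D tH X2 = psi *: tH.
  rewrite opcomm_shift // hDini -hsol /tH /psi -!mul_mpolyC rmorphD rmorphM /=.
  ring.
have htH : tH != 0.
  apply: contra_neq hne => /(congr1 (mcoeff U_(i0))).
  by rewrite mcoeffD mcoeffZ mcoeff0 mulrC.
split=> //.
- rewrite (opmulDl D X2 hX1 (first_orderC alpha)) opmulCl //.
  by rewrite opprD addrACA subrr addr0.
- by split=> //; rewrite opmulCl -hcomm /opcomm opprB.
rewrite /ILT_result /Dini_result opmulDr //.
rewrite opmulCr // !opmulCl -hsol /tX1 /tH /psi -!mul_mpolyC !rmorphD !rmorphM /=.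
ring.
Qed.
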